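(* In the setting described in the context, let $\sigma_w,\sigma_v$ be real scalars and let $\Pi_\tau(s)=W^{1/2}\tilde\Sigma_\tau(s)$, where $$\tilde\Sigma_\tau(s)=R^T\big(sI+L_{e,s}^\tau RWR^T\big)^{-1}\begin{bmatrix}\sigma_wD_\tau^TE^{-1/2} & -\sigma_vL_{e,s}^\tau RW^{1/2}\end{bmatrix}.$$ Then $\|\Pi_\tau\|_\infty^2=\bar\sigma(\sigma_w^2X+\sigma_v^2Y)$, where $$X=W^{1/2}R^T\big(RWR^TL_{e,s}^\tau RWR^T\big)^{-1}RW^{1/2},\qquad Y=W^{1/2}R^T\big(RWR^T\big)^{-1}RW^{1/2}.$$
   Context: Let $\mathcal G$ be an undirected, connected graph without self-loops, with node set $\{1,\dots,n\}$ ($n\ge2$) and edge set $\mathcal E$, $m=|\mathcal E|$. Give each edge an arbitrary orientation; the incidence matrix $D\in\mathbb R^{n\times m}$ has $D_{il}=1$ if node $i$ is the initial node of edge $l$, $-1$ if it is the terminal node, and $0$ otherwise. Fix a spanning tree $\mathcal G_\tau$ and order the edges so the first $n-1$ are tree edges; write $D=[D_\tau\ D_c]$ with $D_\tau\in\mathbb R^{n\times(n-1)}$. Set $T_\tau^c=(D_\tau^TD_\tau)^{-1}D_\tau^TD_c$ and $R=[I_{n-1}\ T_\tau^c]\in\mathbb R^{(n-1)\times m}$. Let $W=\mathrm{diag}(w_1,\dots,w_m)$, $w_l>0$, and $E=\mathrm{diag}(\epsilon_1,\dots,\epsilon_n)$, $\epsilon_i>0$; powers of these diagonal matrices are taken entrywise.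 Define $L_{e,s}^\tau=D_\tau^TE^{-1}D_\tau$. For a stable transfer matrix $\Phi(s)$, $\|\Phi\|_\infty=\sup_{\omega\in\mathbb R}\bar\sigma(\Phi(j\omega))$ where $\bar\sigma$ is the largest singular value. *)

From HB Require Import structures.
From mathcomp Require Import all_boot all_order all_algebra.
From mathcomp Require Import boolp classical_sets reals.
From mathcomp Require Import complex.
Set Implicit Arguments. Unset Strict Implicit. Unset Printing Implicit Defensive.
Import Order.TTheory GRing.Theory Num.Theory.
Local Open Scope ring_scope.
Local Open Scope classical_set_scope.
Local Open Scope complex_scope.

Definition is_incidence (R : pzRingType) (n m : nat) (D : 'M[R]_(n, m)) : Prop :=
  forall l : 'I_m, exists i j : 'I_n,
    [/\ i != j, D i l = 1, D j l = -1 &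
        forall h : 'I_n, h != i -> h != j -> D h l = 0].

Definition adj_by (R : pzRingType) (n m : nat) (D : 'M[R]_(n, m)) : rel 'I_n :=
  fun i j => [exists l : 'I_m, (D i l != 0) && (D j l != 0)].

Definition graph_connected (R : pzRingType) (n m : nat) (D : 'M[R]_(n, m)) : Prop :=
  forall i j : 'I_n, connect (adj_by D) i j.

Section Mats.
Variables (R : realType) (k c : nat).
(* nodes: 'I_k.+1 (n = k+1), tree edges: 'I_k (n-1 of them),
   remaining edges: 'I_c, m = k + c *)
Variables (Dt : 'M[R]_(k.+1, k)) (Dc : 'M[R]_(k.+1, c)).
Variables (w : 'rV[R]_(k + c)) (e : 'rV[R]_(k.+1)).

Definition Wm : 'M[R]_(k + c) := diag_mx w.
Definition Wsqrt : 'M[R]_(k + c) := diag_mx (map_mx Num.sqrt w).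
Definition Einv : 'M[R]_(k.+1) := diag_mx (map_mx GRing.inv e).
Definition Einvsqrt : 'M[R]_(k.+1) :=
  diag_mx (map_mx (fun x => (Num.sqrt x)^-1) e).

Definition Ttc : 'M[R]_(k, c) := invmx (Dt^T *m Dt) *m Dt^T *m Dc.
Definition Rm : 'M[R]_(k, k + c) := row_mx 1%:M Ttc.
Definition Les : 'M[R]_k := Dt^T *m Einv *m Dt.

Definition cmx (p q : nat) (A : 'M[R]_(p, q)) : 'M[R[i]]_(p, q) :=
  map_mx (real_complex R) A.

Variables (sw sv : R).

Definition Bmx : 'M[R]_(k, k.+1 + (k + c)) :=
  row_mx (sw *: (Dt^T *m Einvsqrt)) (- sv *: (Les *m Rm *m Wsqrt)).

Definition Pi_tau (s : R[i]) : 'M[R[i]]_(k + c, k.+1 + (k + c)) :=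
  cmx Wsqrt *m cmx Rm^T *m invmx (s%:M + cmx (Les *m Rm *m Wm *m Rm^T))
    *m cmx Bmx.

Definition Xmx : 'M[R]_(k + c) :=
  Wsqrt *m Rm^T *m invmx (Rm *m Wm *m Rm^T *m Les *m Rm *m Wm *m Rm^T)
    *m Rm *m Wsqrt.
Definition Ymx : 'M[R]_(k + c) :=
  Wsqrt *m Rm^T *m invmx (Rm *m Wm *m Rm^T) *m Rm *m Wsqrt.
End Mats.

Definition adjmx (R : rcfType) (p q : nat) (A : 'M[R[i]]_(p, q)) : 'M[R[i]]_(q, p) :=
  (map_mx (@conjc R) A)^T.

(* largest singular value: square root of the largest eigenvalue of A^* A
   (all eigenvalues of A^* A are real and nonnegative) *)
Definition sigma_max (R : realType) (p q : nat) (A : 'M[R[i]]_(p, q)) : R :=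
  Num.sqrt (sup [set x : R | eigenvalue (adjmx A *m A) x%:C]).

Definition hinf_norm (R : realType) (p q : nat) (Phi : R[i] -> 'M[R[i]]_(p, q)) : R :=
  sup (range (fun om : R => sigma_max (Phi (Complex 0 om)))).

(* Write Pi(s) = K (sI + N)^-1 B with K = W^1/2 R^T and N = L G, where
   L = L_{e,s}^tau and G = R W R^T are positive definite, and note that
   B B^T = sw^2 L + sv^2 L G L commutes with N^T.  Given a row vector r, put
   x = r K (sI + N)^-1 N^-1, so that r Pi(s) = x N B and r Pi(0) = s x B + x N B.
   The commutation makes <x B, x N B> real, so for imaginary s the cross term
   of |s x B + x N B|^2 vanishes and |r Pi(jw)| <= |r Pi(0)|: the H-infinity
   norm is attained at w = 0.
   Finally Pi(0) Pi(0)^T = sw^2 X + sv^2 Y, so ||Pi||_oo^2 is the largest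
   eigenvalue of this positive semidefinite matrix, i.e. its largest singular
   value. *)

From HB Require Import structures.
From mathcomp Require Import all_boot all_order all_algebra.
From mathcomp Require Import boolp classical_sets reals.
From mathcomp Require Import complex sesquilinear spectral.
Import Order.TTheory GRing.Theory Num.Theory.
Set Implicit Arguments. Unset Strict Implicit. Unset Printing Implicit Defensive.
Local Open Scope ring_scope.
Local Open Scope sesquilinear_scope.

Local Notation "''[' u , v ]" := (dotmx u v) : ring_scope.
Local Notation "''[' u ]" := (dotmx u u) : ring_scope.

Section FieldMatrices.
Variable F : fieldType.

Lemma invmxM n (A B : 'M[F]_n) : A \in unitmx -> B \in unitmx ->
  invmx (A *m B) = invmx B *m invmx A.
Proof.
move=> uA uB; have uAB : A *m B \in unitmx by rewrite unitmx_mul uA uB.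
apply: (row_free_inj (A := A *m B)); first by rewrite row_free_unit.
by rewrite /= mulVmx // mulmxA mulmxKV // mulVmx.
Qed.

Lemma invmx_mul_sym_congr n (L G : 'M[F]_n) a b :
  L \in unitmx -> G \in unitmx -> L^T = L -> G^T = G ->
  invmx (L *m G) *m (a *: L + b *: (L *m G *m L)) *m (invmx (L *m G))^T
  = a *: invmx (G *m L *m G) + b *: invmx G.
Proof.
move=> uL uG tL tG.
rewrite trmx_inv trmx_mul tL tG !invmxM ?unitmx_mul ?uL ?uG //.
rewrite mulmxDr mulmxDl -!scalemxAr -!scalemxAl !mulmxA mulmxKV //.
by rewrite mulVmx // mul1mx mulmxV // mul1mx.
Qed.

Lemma eigenvalue_conj_diag n (P : 'M[F]_n) (d : 'rV[F]_n) i :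
  P \in unitmx -> eigenvalue (invmx P *m diag_mx d *m P) (d 0 i).
Proof.
move=> uP; apply/eigenvalueP; exists (delta_mx 0 i *m P).
  by rewrite !mulmxA mulmxK // -rowE row_diag_mx scalemxAl.
rewrite mulmx_free_eq0 ?row_free_unit //; apply/eqP => /matrixP/(_ 0 i).
by rewrite !mxE !eqxx => /eqP; rewrite oner_eq0.
Qed.

Lemma eigenvalue_mulmxC m n (A : 'M[F]_(m, n)) (B : 'M[F]_(n, m)) x :
  x != 0 -> eigenvalue (A *m B) x -> eigenvalue (B *m A) x.
Proof.
move=> x_neq0 /eigenvalueP[v vAB v_neq0]; apply/eigenvalueP; exists (v *m A).
  by rewrite mulmxA -(mulmxA v) vAB scalemxAl.
apply: contraNneq v_neq0 => vA0; have := vAB.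
by rewrite mulmxA vA0 mul0mx => /esym/eqP; rewrite scaler_eq0 (negPf x_neq0).
Qed.

End FieldMatrices.

Lemma mul_row_tr_eq0 (R : realFieldType) n (v : 'rV[R]_n) :
  (v *m v^T == 0) = (v == 0).
Proof.
apply/idP/idP => [/eqP/matrixP/(_ 0 0)|/eqP->]; last by rewrite mul0mx.
rewrite !mxE => /eqP; rewrite psumr_eq0 => [/allP v0|j _]; last first.
  by rewrite mxE -expr2 sqr_ge0.
apply/eqP/rowP => j; have := v0 j (mem_index_enum j).
by rewrite implyTb mxE -expr2 sqrf_eq0 mxE => /eqP.
Qed.

Lemma gram_unitmx (R : realFieldType) n m (F : 'M[R]_(n, m)) :
  row_free F -> F *m F^T \in unitmx.
Proof.
move=> freeF; rewrite -row_free_unit; apply/inj_row_free => u uFF0.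
apply/eqP; rewrite -(mulmx_free_eq0 _ freeF) -mul_row_tr_eq0.
by rewrite trmx_mul !mulmxA -(mulmxA u) uFF0 mul0mx.
Qed.

Lemma diag_mx_gt0_unit (R : realFieldType) n (d : 'rV[R]_n) :
  (forall j, 0 < d 0 j) -> diag_mx d \in unitmx.
Proof.
move=> d_gt0; rewrite unitmxE det_diag unitfE.
by apply/prodf_neq0 => j _; rewrite gt_eqF.
Qed.

Section Incidence.
Variable R : fieldType.

Lemma is_incidence_row_mxl n m p (A : 'M[R]_(n, m)) (B : 'M[R]_(n, p)) :
  is_incidence (row_mx A B) -> is_incidence A.
Proof.
move=> incAB l; have [i [j [ij Ai Aj A0]]] := incAB (lshift p l).
exists i, j; rewrite !row_mxEl in Ai Aj; split=> // h hi hj.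
by rewrite -(row_mxEl A B) A0.
Qed.

Lemma incidence_left_kernel_const n m (D : 'M[R]_(n, m)) (y : 'rV[R]_n) :
  is_incidence D -> graph_connected D -> y *m D = 0 -> forall i j, y 0 i = y 0 j.
Proof.
move=> incD connD yD0.
have yadj a b : adj_by D a b -> y 0 a = y 0 b.
  case/existsP=> l /andP[Da Db]; have [i [j [ij Di Dj D0]]] := incD l.
  have yij : y 0 i = y 0 j.
    have /rowP/(_ l) := yD0; rewrite !mxE (bigD1 i) //= (bigD1 j) 1?eq_sym //=.
    rewrite big1 => [|h /andP[hj hi]]; last by rewrite D0 // mulr0.
    by rewrite Di Dj mulr1 mulrN1 addr0 => /eqP; rewrite subr_eq0 => /eqP.
  have yend x : D x l != 0 -> y 0 x = y 0 i.
    move=> Dx; have [->//|xi] := eqVneq x i; have [->//|xj] := eqVneq x j.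
    by rewrite D0 ?eqxx in Dx.
  by rewrite (yend a Da) (yend b Db).
move=> a b; have /connectP[p pth ->] := connD a b.
elim: p a pth => [|x p IHp] a //= /andP[ax px].
by rewrite (yadj a x ax) (IHp x px).
Qed.

Lemma incidence_rank n m (D : 'M[R]_(n.+1, m)) :
  is_incidence D -> graph_connected D -> (n <= \rank D)%N.
Proof.
move=> incD connD.
have kerD : (kermx D <= (const_mx 1 : 'rV[R]_n.+1))%MS.
  apply/row_subP => i; have /sub_kermxP := row_sub i (kermx D).
  move: (row i _) => y yD0.
  have -> : y = y 0 0 *: const_mx 1.
    apply/rowP => j; rewrite !mxE mulr1.
    exact: (incidence_left_kernel_const incD connD yD0).
  exact: scalemx_sub.
have := leq_trans (mxrankS kerD) (rank_leq_row _).
by rewrite mxrank_ker leq_subLR addn1 ltnS.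
Qed.

End Incidence.

Section DotProduct.
Variable C : numClosedFieldType.

Lemma adjmxM m n p (A : 'M[C]_(m, n)) (B : 'M[C]_(n, p)) :
  (A *m B)^t* = B^t* *m A^t*.
Proof. by rewrite trmx_mul map_mxM. Qed.

Lemma dotmx_mulmx_adj n m (u : 'rV[C]_n) (v : 'rV[C]_m) (A : 'M[C]_(n, m)) :
  '[u *m A, v] = '[u, v *m A^t*].
Proof. by rewrite !dotmxE adjmxM trmxCK mulmxA. Qed.

Lemma dotmx_gram n m (u : 'rV[C]_n) (F : 'M[C]_(n, m)) :
  '[u *m (F *m F^t*), u] = '[u *m F].
Proof. by rewrite mulmxA dotmx_mulmx_adj trmxCK. Qed.

Lemma dotmx_eigen n (u : 'rV[C]_n) (A : 'M[C]_n) a :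
  u *m A = a *: u -> '[u *m A, u] = a * '[u].
Proof. by move=> ->; rewrite !dotmxE -scalemxAl mxE. Qed.

Lemma dnorm_resolvent_le n p q (s : C) (N : 'M[C]_n) (K : 'M[C]_(p, n))
    (B : 'M[C]_(n, q)) :
  s + s^* = 0 -> N \in unitmx -> s%:M + N \in unitmx ->
  B *m B^t* *m N^t* = N *m (B *m B^t*) ->
  forall r, '[r *m (K *m invmx (s%:M + N) *m B)] <= '[r *m (K *m invmx N *m B)].
Proof.
move=> ss uN uA QN r; pose x := r *m K *m invmx (s%:M + N) *m invmx N.
have NA : invmx N *m (s%:M + N) = (s%:M + N) *m invmx N.
  by rewrite mulmxDr mulmxDl mul_mx_scalar mul_scalar_mx mulVmx // mulmxV.
have -> : r *m (K *m invmx (s%:M + N) *m B) = x *m N *m B.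
  by rewrite /x mulmxKV // !mulmxA.
have xA : x *m (s%:M + N) = r *m K *m invmx N.
  by rewrite /x -mulmxA NA mulmxA mulmxKV.
have -> : r *m (K *m invmx N *m B) = s *: (x *m B) + x *m N *m B.
  by rewrite !mulmxA -xA mulmxDr mul_mx_scalar mulmxDl scalemxAl.
clearbody x.
have t_sym : '[x *m B, x *m N *m B] = '[x *m N *m B, x *m B].
  rewrite !dotmx_mulmx_adj; congr dotmx.
  by rewrite -!mulmxA [B *m (B^t* *m _)]mulmxA QN.
have t_real : '[x *m B, x *m N *m B]^* = '[x *m B, x *m N *m B].
  by rewrite {2}t_sym (hermC (@dotmx C q) (x *m N *m B)) /= expr0 mul1r.
rewrite dnormD dnormZ linearZl_LR /= rmorphM /= t_real -mulrDl ss mul0r addr0.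
by rewrite lerDr mulr_ge0 ?exprn_ge0 ?dnorm_ge0.
Qed.

Lemma scalar_add_gram_mul_unitmx n m p (s : C) (F : 'M[C]_(n, m))
    (H : 'M[C]_(n, p)) :
  s + s^* = 0 -> F *m F^t* \in unitmx -> H *m H^t* \in unitmx ->
  s%:M + F *m F^t* *m (H *m H^t*) \in unitmx.
Proof.
set L := F *m F^t*; set G := H *m H^t* => ss uL uG.
rewrite -row_free_unit; apply/inj_row_free => u.
rewrite mulmxDr mul_mx_scalar mulmxA addrC => /eqP; rewrite addr_eq0 => /eqP uLG.
have sC : s^* = - s by apply/eqP; rewrite -addr_eq0 addrC ss.
have uLH_s : '[u *m L *m H] = - s * '[u *m F].
  rewrite -dotmx_gram -/G uLG -scaleNr linearZl_LR /= -dotmx_gram -/L.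
  by congr (_ * _); rewrite [RHS]dotmx_mulmx_adj /L adjmxM trmxCK.
have uLH_sC : '[u *m L *m H] = s * '[u *m F].
  rewrite -[LHS]conj_Creal ?ger0_real ?dnorm_ge0 // uLH_s rmorphM rmorphN /= sC.
  by rewrite opprK conj_Creal ?ger0_real ?dnorm_ge0.
have : '[u *m L *m H] + '[u *m L *m H] == 0.
  by rewrite addr_eq0 {1}uLH_s uLH_sC mulNr.
rewrite paddr_eq0 ?dnorm_ge0 // andbb dnorm_eq0 => /eqP uLH0.
apply/eqP; rewrite -(mulmx_free_eq0 _ (B := L *m G)).
  by rewrite mulmxA /G mulmxA uLH0 mul0mx.
by rewrite row_free_unit unitmx_mul uL uG.
Qed.

Lemma dotmx_diag_le n (d : 'rV[C]_n) (m : C) (u : 'rV[C]_n) :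
  (forall j, d 0 j <= m) -> '[u *m diag_mx d, u] <= m * '[u].
Proof.
move=> dm; rewrite !dotmxE mul_mx_diag !mxE mulr_sumr; apply: ler_sum => j _.
rewrite !mxE mulrAC [m * _]mulrC ler_wpM2l ?dm //.
by rewrite mul_conjC_ge0.
Qed.

Lemma dotmx_unitary_diag_le n (P : 'M[C]_n) (d : 'rV[C]_n) (m : C) (v : 'rV[C]_n) :
  P \is unitarymx -> (forall j, d 0 j <= m) ->
  '[v *m (invmx P *m diag_mx d *m P), v] <= m * '[v].
Proof.
move=> Pu dm; rewrite invmx_unitary // !mulmxA dotmx_mulmx_adj.
have -> : '[v] = '[v *m P^t*].
  rewrite dotmx_mulmx_adj trmxCK -mulmxA -invmx_unitary //.
  by rewrite mulVmx ?unitarymx_unit ?mulmx1.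
exact: dotmx_diag_le.
Qed.

End DotProduct.

Local Open Scope complex_scope.

Lemma hermitian_psd_top_eigenvalue (R : rcfType) n (A : 'M[R[i]]_n) :
  (0 < n)%N -> A^t* = A -> (forall v, 0 <= '[v *m A, v]) ->
  exists2 lam : R, 0 <= lam & [/\ eigenvalue A lam%:C,
    forall v, '[v *m A, v] <= lam%:C * '[v],
    eigenvalue (A *m A^t*) (lam ^+ 2)%:C &
    forall v, '[v *m A] <= (lam ^+ 2)%:C * '[v]].
Proof.
move=> n_gt0 hA psdA.
have /orthomx_spectralP AE : A \is normalmx by apply/normalmxP; rewrite hA.
have Pu := spectral_unitarymx A; have uP := unitarymx_unit Pu.
move: (spectralmx A) (spectral_diag A) AE Pu uP => P d AE Pu uP.
have d_ge0 j : 0 <= d 0 j.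
  have /eigenvalueP[v vA v_neq0] := eigenvalue_conj_diag d j uP.
  by have := psdA v; rewrite AE (dotmx_eigen vA) pmulr_lge0 ?dnorm_gt0.
have dE j : d 0 j = (complex.Re (d 0 j))%:C by rewrite RRe_real ?ger0_real.
pose j0 := [arg max_(j > Ordinal n_gt0) complex.Re (d 0 j)]%O.
have d_le j : d 0 j <= (complex.Re (d 0 j0))%:C.
  rewrite dE lecR /j0; case: Order.TotalTheory.arg_maxP => //= i _; exact.
pose d2 := \row_j (d 0 j ^+ 2).
have AA : A *m A^t* = invmx P *m diag_mx d2 *m P.
  have -> : diag_mx d2 = diag_mx d *m diag_mx d.
    by rewrite mulmx_diag; congr diag_mx; apply/rowP => j; rewrite !mxE expr2.
  by rewrite hA AE !mulmxA mulmxK.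
have d2E : d2 0 j0 = (complex.Re (d 0 j0) ^+ 2)%:C by rewrite mxE {1}dE rmorphXn.
exists (complex.Re (d 0 j0)); first by rewrite -ler0c -dE.
split.
- by rewrite -dE AE; exact: eigenvalue_conj_diag.
- by move=> v; rewrite AE; apply: dotmx_unitary_diag_le.
- by rewrite -d2E AA; exact: eigenvalue_conj_diag.
move=> v; rewrite -dotmx_gram AA; apply: dotmx_unitary_diag_le => // j.
rewrite mxE rmorphXn /=; apply: lerXn2r => //; rewrite ?nnegrE ?d_ge0 //.
exact: le_trans (d_ge0 j) (d_le j).
Qed.

Lemma sup_maximum (R : realType) (E : set R) m :
  E m -> (forall x, E x -> x <= m) -> sup E = m.
Proof.
move=> Em ubE; apply/eqP; rewrite eq_le ge_sup //=; last by exists m.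
by apply: ub_le_sup => //; exists m.
Qed.

Section SingularValues.
Variable R : realType.
Local Open Scope classical_set_scope.

Lemma adjmxE p q (A : 'M[R[i]]_(p, q)) : adjmx A = A^t*.
Proof. by apply/matrixP => i j; rewrite !mxE; case: (A j i). Qed.

Lemma cmxM p q r (A : 'M[R]_(p, q)) (B : 'M[R]_(q, r)) :
  cmx (A *m B) = cmx A *m cmx B.
Proof. exact: map_mxM. Qed.

Lemma cmx_adj p q (A : 'M[R]_(p, q)) : (cmx A)^t* = cmx A^T.
Proof. by apply/matrixP => i j; rewrite !mxE; exact: conjc_real. Qed.

Lemma adj_mul_eigenvalue_ge0 p q (P : 'M[R[i]]_(p, q)) x :
  eigenvalue (P^t* *m P) x%:C -> 0 <= x.
Proof.
move=> /eigenvalueP[v vPP v_neq0].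
have : 0 <= '[v *m P^t*] by exact: dnorm_ge0.
rewrite -dotmx_gram trmxCK (dotmx_eigen vPP) pmulr_lge0 ?dnorm_gt0 //.
by rewrite ler0c.
Qed.

Lemma adj_mul_eigenvalue_le p q (P : 'M[R[i]]_(p, q)) m x :
  (forall u, '[u *m P] <= m%:C * '[u]) -> 0 <= m ->
  eigenvalue (P^t* *m P) x%:C -> x <= m.
Proof.
move=> Pm m_ge0 eigx; have [x_le0|x_gt0] := leP x 0; first exact: le_trans x_le0 _.
have /eigenvalueP[v vPP v_neq0] : eigenvalue (P *m P^t*) x%:C.
  by apply: eigenvalue_mulmxC eigx; rewrite eq_complex /= gt_eqF.
have := Pm v; rewrite -dotmx_gram (dotmx_eigen vPP) ler_pM2r ?dnorm_gt0 //.
by rewrite lecR.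
Qed.

Lemma sigma_max_le p q (P : 'M[R[i]]_(p, q)) m :
  0 <= m -> (forall u, '[u *m P] <= m%:C * '[u]) -> sigma_max P <= Num.sqrt m.
Proof.
move=> m_ge0 Pm; rewrite /sigma_max adjmxE ler_wsqrtr //.
set S := [set x | _]; have [->|S_neq0] := eqVneq S set0; first by rewrite sup0.
by apply: ge_sup; [exact/set0P | move=> x; exact: adj_mul_eigenvalue_le].
Qed.

Lemma sigma_max_eq p q (P : 'M[R[i]]_(p, q)) m :
  0 <= m -> (forall u, '[u *m P] <= m%:C * '[u]) ->
  eigenvalue (P *m P^t*) m%:C -> sigma_max P = Num.sqrt m.
Proof.
move=> m_ge0 Pm eigm; apply/le_anti; rewrite sigma_max_le //= /sigma_max adjmxE.
rewrite ler_wsqrtr //; set S := [set x | _].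
have ubS : ubound S m by move=> x; exact: adj_mul_eigenvalue_le.
have [m_eq0|m_gt0] := eqVneq m 0.
  rewrite m_eq0; have [->|/set0P[x Sx]] := eqVneq S set0; first by rewrite sup0.
  exact: le_trans (adj_mul_eigenvalue_ge0 Sx) (ub_le_sup (ex_intro _ m ubS) Sx).
apply: ub_le_sup; first by exists m.
by apply: eigenvalue_mulmxC eigm; rewrite eq_complex /= eqxx andbT.
Qed.

End SingularValues.

Section PaperMatrices.
Variables (R : realType) (k c : nat).
Variables (Dt : 'M[R]_(k.+1, k)) (Dc : 'M[R]_(k.+1, c)).
Variables (w : 'rV[R]_(k + c)) (e : 'rV[R]_(k.+1)) (sw sv : R).
Hypothesis w_gt0 : forall l, 0 < w 0 l.
Hypothesis e_gt0 : forall i, 0 < e 0 i.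
Hypothesis Dt_free : row_free Dt^T.

Local Notation W := (Wm w).
Local Notation Ws := (Wsqrt w).
Local Notation Eis := (Einvsqrt e).
Local Notation Rr := (Rm Dt Dc).
Local Notation L := (Les Dt e).
Local Notation G := (Rr *m W *m Rr^T).
Local Notation B := (Bmx Dt Dc w e sw sv).
Local Notation M := (sw ^+ 2 *: Xmx Dt Dc w e + sv ^+ 2 *: Ymx Dt Dc w).
Local Notation P0 := (Ws *m Rr^T *m invmx (L *m G) *m B).

Lemma Wsqrt_sq : Ws *m Ws^T = W.
Proof.
rewrite tr_diag_mx mulmx_diag; congr diag_mx; apply/rowP => j.
by rewrite !mxE -expr2 sqr_sqrtr // ltW.
Qed.

Lemma Einvsqrt_sq : Eis *m Eis^T = Einv e.
Proof.
rewrite tr_diag_mx mulmx_diag; congr diag_mx; apply/rowP => j.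
by rewrite !mxE -invfM -expr2 sqr_sqrtr // ltW.
Qed.

Lemma Les_gram : L = (Dt^T *m Eis) *m (Dt^T *m Eis)^T.
Proof. by rewrite trmx_mul trmxK mulmxA -(mulmxA _ Eis) Einvsqrt_sq. Qed.

Lemma Rm_Wm_gram : G = (Rr *m Ws) *m (Rr *m Ws)^T.
Proof. by rewrite trmx_mul mulmxA -(mulmxA _ Ws) Wsqrt_sq. Qed.

Lemma Les_sym : L^T = L.
Proof. by rewrite Les_gram trmx_mul trmxK. Qed.

Lemma Rm_Wm_sym : G^T = G.
Proof. by rewrite Rm_Wm_gram trmx_mul trmxK. Qed.

Lemma Les_unit : L \in unitmx.
Proof.
rewrite Les_gram gram_unitmx // /row_free mxrankMfree ?row_free_unit //.
by apply: diag_mx_gt0_unit => j; rewrite mxE invr_gt0 sqrtr_gt0.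
Qed.

Lemma Rm_Wm_unit : G \in unitmx.
Proof.
rewrite Rm_Wm_gram gram_unitmx // /row_free mxrankMfree; last first.
  by rewrite row_free_unit; apply: diag_mx_gt0_unit => j; rewrite mxE sqrtr_gt0.
have RK : Rr *m col_mx 1%:M 0 = 1%:M by rewrite mul_row_col mulmx1 mulmx0 addr0.
by apply/inj_row_free => u uR0; rewrite -[u]mulmx1 -RK mulmxA uR0 mul0mx.
Qed.

Lemma Bmx_gram : B *m B^T = sw ^+ 2 *: L + sv ^+ 2 *: (L *m G *m L).
Proof.
rewrite /Bmx tr_row_mx mul_row_col !linearZ /= -!scalemxAl !scalerA.
rewrite -!expr2 sqrrN -Les_gram; congr (_ + _ *: _).
rewrite [(L *m Rr *m Ws)^T]trmx_mul [(L *m Rr)^T]trmx_mul Les_sym.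
by rewrite !mulmxA -[_ *m Ws *m Ws^T]mulmxA Wsqrt_sq.
Qed.

Lemma Bmx_gram_comm : B *m B^T *m (L *m G)^T = L *m G *m (B *m B^T).
Proof.
rewrite Bmx_gram trmx_mul Les_sym Rm_Wm_sym mulmxDl mulmxDr -!scalemxAl -!scalemxAr.
by rewrite !mulmxA.
Qed.

Lemma Mmx_gram : M = P0 *m P0^T.
Proof.
have -> : P0 *m P0^T
    = Ws *m Rr^T *m (invmx (L *m G) *m (B *m B^T) *m (invmx (L *m G))^T) *m (Rr *m Ws).
  by rewrite !trmx_mul trmxK tr_diag_mx !mulmxA.
rewrite Bmx_gram invmx_mul_sym_congr ?Les_unit ?Rm_Wm_unit ?Les_sym ?Rm_Wm_sym //.
by rewrite mulmxDr mulmxDl -!scalemxAr -!scalemxAl /Xmx /Ymx !mulmxA.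
Qed.

Lemma Pi_tau0 : Pi_tau Dt Dc w e sw sv 0 = cmx P0.
Proof.
by rewrite /Pi_tau raddf0 add0r -!mulmxA /cmx -map_invmx -!map_mxM.
Qed.

Lemma Pi_tau0_gram :
  cmx M = Pi_tau Dt Dc w e sw sv 0 *m (Pi_tau Dt Dc w e sw sv 0)^t*.
Proof. by rewrite Pi_tau0 cmx_adj -cmxM -Mmx_gram. Qed.

Lemma Pi_tau_dnorm_le (s : R[i]) u : s + s^*%R = 0 ->
  '[u *m Pi_tau Dt Dc w e sw sv s] <= '[u *m Pi_tau Dt Dc w e sw sv 0].
Proof.
move=> ss; rewrite Pi_tau0.
pose F := cmx (Dt^T *m Eis); pose H := cmx (Rr *m Ws).
have LGE : cmx (L *m G) = F *m F^t* *m (H *m H^t*).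
  by rewrite !cmx_adj -!cmxM -Les_gram -Rm_Wm_gram.
have uLG : cmx (L *m G) \in unitmx.
  by rewrite map_unitmx unitmx_mul Les_unit Rm_Wm_unit.
have -> : cmx P0 = cmx Ws *m cmx Rr^T *m invmx (cmx (L *m G)) *m cmx B.
  by rewrite /cmx -map_invmx -!map_mxM.
have -> : Pi_tau Dt Dc w e sw sv s
    = cmx Ws *m cmx Rr^T *m invmx (s%:M + cmx (L *m G)) *m cmx B.
  by rewrite /Pi_tau !mulmxA.
apply: (@dnorm_resolvent_le _ _ _ _ _ (cmx (L *m G)) (cmx Ws *m cmx Rr^T) (cmx B)).
- exact: ss.
- exact: uLG.
- rewrite LGE; apply: scalar_add_gram_mul_unitmx ss _ _.
    by rewrite cmx_adj -cmxM -Les_gram map_unitmx Les_unit.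
  by rewrite cmx_adj -cmxM -Rm_Wm_gram map_unitmx Rm_Wm_unit.
- by rewrite !cmx_adj -(cmxM B) -(cmxM (B *m B^T)) -(cmxM (L *m G)) Bmx_gram_comm.
Qed.

End PaperMatrices.

Theorem lemma6 (R : realType) (k c : nat)
  (Dt : 'M[R]_(k.+1, k)) (Dc : 'M[R]_(k.+1, c))
  (w : 'rV[R]_(k + c)) (e : 'rV[R]_(k.+1)) (sw sv : R) :
  (0 < k)%N ->
  is_incidence (row_mx Dt Dc) ->
  graph_connected (row_mx Dt Dc) ->
  graph_connected Dt ->
  (forall l, 0 < w 0 l) ->
  (forall i, 0 < e 0 i) ->
  hinf_norm (Pi_tau Dt Dc w e sw sv) ^+ 2
  = sigma_max (cmx (sw ^+ 2 *: Xmx Dt Dc w e + sv ^+ 2 *: Ymx Dt Dc w)).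
Proof.
move=> k_gt0 incD _ connDt w_gt0 e_gt0.
have Dt_free : row_free Dt^T.
  rewrite /row_free mxrank_tr eqn_leq rank_leq_col.
  exact: incidence_rank (is_incidence_row_mxl incD) connDt.
set M := cmx _; set Pi := Pi_tau Dt Dc w e sw sv.
have MPi : M = Pi 0 *m (Pi 0)^t* := Pi_tau0_gram Dc sw sv w_gt0 e_gt0 Dt_free.
have M_herm : M^t* = M by rewrite MPi adjmxM trmxCK.
have M_psd v : 0 <= '[v *m M, v] by rewrite MPi dotmx_gram dnorm_ge0.
have [lam lam_ge0 [eigM rayM eigM2 rayM2]] :=
  hermitian_psd_top_eigenvalue (ltn_addr c k_gt0) M_herm M_psd.
have Pi_ray om u : '[u *m Pi (Complex 0 om)] <= lam%:C * '[u].
  apply: le_trans (Pi_tau_dnorm_le Dc sw sv w_gt0 e_gt0 Dt_free u _) _.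
    by apply/eqP; rewrite eq_complex /= addr0 subrr !eqxx.
  by rewrite -dotmx_gram -MPi rayM.
have -> : hinf_norm Pi = Num.sqrt lam.
  apply: sup_maximum => [|_ [om _ <-]]; last exact: sigma_max_le (Pi_ray om).
  have Pi00 : Pi (Complex 0 0) = Pi 0 by [].
  exists 0; first by [].
  by apply: (sigma_max_eq lam_ge0 (Pi_ray 0)); rewrite Pi00 -MPi; exact: eigM.
rewrite (sqr_sqrtr lam_ge0) (sigma_max_eq (exprn_ge0 2 lam_ge0) rayM2 eigM2).
by rewrite sqrtr_sqr ger0_norm.
Qed.
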